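(* For any constant $\beta\in\mathbb R$, the system $\dot I=\varepsilon(\beta\sin\theta+1)$, $\dot\theta=I$, $(I,\theta)\in\mathbb R\times\mathbb T$, has no non-constant real-analytic first integral depending analytically on $\varepsilon$ near $\varepsilon=0$.
   Context: $\mathbb T=\mathbb R/2\pi\mathbb Z$; $\varepsilon$ is a small real parameter. *)

From Stdlib Require Import Reals.
From Coquelicot Require Import Coquelicot.
Open Scope R_scope.

Definition diag3 (t : nat -> nat -> nat -> R) (n : nat) : R :=
  sum_n (fun i => sum_n (fun j => t i j (n - i - j)%nat) (n - i)%nat) n.

Definition analytic3_at (F : R -> R -> R -> R) (x0 y0 z0 : R) : Prop :=
  exists r : R, 0 < r /\
  exists a : nat -> nat -> nat -> R,
    forall x y z : R,
      Rabs (x - x0) < r -> Rabs (y - y0) < r -> Rabs (z - z0) < r ->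
      ex_series (diag3 (fun i j k =>
        Rabs (a i j k) * Rabs (x - x0) ^ i * Rabs (y - y0) ^ j
          * Rabs (z - z0) ^ k)) /\
      F x y z = Series (diag3 (fun i j k =>
        a i j k * (x - x0) ^ i * (y - y0) ^ j * (z - z0) ^ k)).

(* F (I, theta, eps) is a real-analytic first integral, depending analytically
   on eps in (-eps0, eps0), of  I' = eps (beta sin theta + 1), theta' = I  on
   R x T (theta in R, F 2pi-periodic in theta). *)
Definition analytic_first_integral (beta eps0 : R) (F : R -> R -> R -> R) : Prop :=
  0 < eps0 /\
  (forall I th e, -eps0 < e < eps0 -> analytic3_at F I th e) /\
  (forall I th e, -eps0 < e < eps0 -> F I (th + 2 * PI) e = F I th e) /\
  (forall I th e, -eps0 < e < eps0 ->
     e * (beta * sin th + 1) * Derive (fun J => F J th e) I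
       + I * Derive (fun t => F I t e) th = 0).

Definition nonconstant_in_phase (eps0 : R) (F : R -> R -> R -> R) : Prop :=
  exists e I1 th1 I2 th2, -eps0 < e < eps0 /\ F I1 th1 e <> F I2 th2 e.

(* Write F(I, θ, ε) = Σ_k g_k(I, θ) ε^k.  Comparing powers of ε in
   ε (β sin θ + 1) ∂_I F + I ∂_θ F = 0 gives I ∂_θ g_0 = 0 and
   I ∂_θ g_{k+1} + (β sin θ + 1) ∂_I g_k = 0.  By induction every g_k is
   constant: once g_k does not depend on θ, integrating the next equation over
   a period removes the ∂_θ g_{k+1} term and, as the mean of β sin θ + 1 is 1,
   leaves ∂_I g_k = 0, so that I ∂_θ g_{k+1} = 0 in turn.  Thus all the
   functions F(I, θ, ·) have the same Taylor series at ε = 0; being analytic on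
   (-ε0, ε0), they coincide there. *)

From Stdlib Require Import Reals Lra Lia Classical.
From Coquelicot Require Import Coquelicot.
Open Scope R_scope.

Lemma sum_n_eq0 (f : nat -> R) n :
  (forall i, (i <= n)%nat -> f i = 0) -> sum_n f n = 0.
Proof.
  intros Hf. rewrite (sum_n_ext_loc f (fun _ => 0)) by exact Hf.
  rewrite sum_n_const; apply Rmult_0_r.
Qed.

Lemma sum_n_single (f : nat -> R) n m : (m <= n)%nat ->
  (forall i, (i <= n)%nat -> i <> m -> f i = 0) -> sum_n f n = f m.
Proof.
  induction n as [|n IH]; intros Hm Hf.
  - rewrite sum_O. f_equal; lia.
  - rewrite sum_Sn. destruct (Nat.eq_dec m (S n)) as [->|Hne].
    + rewrite sum_n_eq0 by (intros i Hi; apply Hf; lia). apply Rplus_0_l.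
    + rewrite IH, (Hf (S n)) by (lia || intros; apply Hf; lia). apply Rplus_0_r.
Qed.

Lemma sum_n_ge_term (f : nat -> R) n m : (m <= n)%nat ->
  (forall i, 0 <= f i) -> f m <= sum_n f n.
Proof.
  intros Hm Hf.
  assert (Hs : sum_n (fun i => if (i =? m)%nat then f i else 0) n = f m).
  { rewrite (sum_n_single _ n m Hm); [now rewrite Nat.eqb_refl |].
    intros i _ Hi. apply Nat.eqb_neq in Hi. now rewrite Hi. }
  rewrite <- Hs. apply sum_n_m_le. intros i. destruct (i =? m)%nat; [lra | apply Hf].
Qed.

Lemma sum_n_rev (g : nat -> nat -> R) n :
  sum_n (fun i => g i (n - i)%nat) n = sum_n (fun i => g (n - i)%nat i) n.
Proof.
  revert g. induction n as [|n IH]; intros g.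
  - now rewrite !sum_O.
  - rewrite sum_Sn. unfold sum_n at 2. rewrite sum_Sn_m, <- sum_n_m_S by lia.
    fold (sum_n (fun i => g (S n - S i)%nat (S i)) n). rewrite Nat.sub_diag, Nat.sub_0_r.
    rewrite (sum_n_ext_loc (fun i => g i (S n - i)%nat) (fun i => g i (S (n - i))))
      by (intros; f_equal; lia).
    rewrite (IH (fun i j => g i (S j))). apply Rplus_comm.
Qed.

Definition diag2 (t : nat -> nat -> R) (n : nat) : R := sum_n (fun i => t i (n - i)%nat) n.

Lemma diag2_ext (t1 t2 : nat -> nat -> R) n :
  (forall i k, t1 i k = t2 i k) -> diag2 t1 n = diag2 t2 n.
Proof. intros H. apply sum_n_ext. intros i. apply H. Qed.

Lemma diag2_plus (t1 t2 : nat -> nat -> R) n :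
  diag2 (fun i k => t1 i k + t2 i k) n = diag2 t1 n + diag2 t2 n.
Proof. unfold diag2. apply (sum_n_plus (G := R_AbelianMonoid)). Qed.

Lemma diag2_abs (t : nat -> nat -> R) n :
  Rabs (diag2 t n) <= diag2 (fun i k => Rabs (t i k)) n.
Proof. unfold diag2. apply (norm_sum_n_m (V := R_NormedModule)). Qed.

Lemma diag2_le (t u : nat -> nat -> R) n :
  (forall i k, t i k <= u i k) -> diag2 t n <= diag2 u n.
Proof. intros H. apply sum_n_m_le. intros i. apply H. Qed.

Lemma diag2_scal (a : R) (t : nat -> nat -> R) n :
  diag2 (fun i k => a * t i k) n = a * diag2 t n.
Proof. unfold diag2. apply (sum_n_mult_l (K := R_Ring)). Qed.

Lemma diag2_swap (t : nat -> nat -> R) n : diag2 (fun k i => t i k) n = diag2 t n.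
Proof. symmetry. apply (sum_n_rev t). Qed.

Lemma diag2_ge_term (t : nat -> nat -> R) i k :
  (forall i k, 0 <= t i k) -> t i k <= diag2 t (i + k).
Proof.
  intros Ht. unfold diag2. replace k with (i + k - i)%nat at 1 by lia.
  apply (sum_n_ge_term (fun j => t j (i + k - j)%nat)); [lia | intros; apply Ht].
Qed.

Lemma diag2_column (w : nat -> R) K n :
  diag2 (fun i k => if (k =? K)%nat then w i else 0) n
  = if (K <=? n)%nat then w (n - K)%nat else 0.
Proof.
  unfold diag2. destruct (Nat.leb_spec K n).
  - rewrite (sum_n_single _ n (n - K)); [| lia |].
    + replace (n - (n - K))%nat with K by lia. now rewrite Nat.eqb_refl.
    + intros i Hin Hi. destruct (Nat.eqb_spec (n - i) K); [lia | reflexivity].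
  - apply sum_n_eq0. intros i _. destruct (Nat.eqb_spec (n - i) K); [lia | reflexivity].
Qed.

Lemma is_series_delay (w : nat -> R) l K : is_series w l ->
  is_series (fun n => if (K <=? n)%nat then w (n - K)%nat else 0) l.
Proof.
  intros Hw. destruct K as [|K].
  - eapply is_series_ext; [| exact Hw]. intros n. simpl. now rewrite Nat.sub_0_r.
  - apply (is_series_decr_n _ (S K)); [lia |].
    rewrite sum_n_eq0 by (intros i Hi; destruct (Nat.leb_spec (S K) i); [lia | reflexivity]).
    change (plus l (opp 0)) with (l + - 0). rewrite Ropp_0, Rplus_0_r.
    eapply is_series_ext; [| exact Hw]. intros n.
    destruct (Nat.leb_spec (S K) (S K + n)); [f_equal; lia | lia].
Qed.

Lemma is_series_diag2_trunc (w : nat -> nat -> R) K :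
  (forall k, ex_series (fun i => w i k)) ->
  is_series (diag2 (fun i k => if (k <=? K)%nat then w i k else 0))
            (sum_n (fun k => Series (fun i => w i k)) K).
Proof.
  intros Hw.
  assert (Hcol : forall m, is_series (diag2 (fun i k => if (k =? m)%nat then w i m else 0))
                                      (Series (fun i => w i m))).
  { intros m. eapply is_series_ext; [intros n; symmetry; apply diag2_column |].
    apply is_series_delay, Series_correct, Hw. }
  induction K as [|K IH].
  - rewrite sum_O. eapply is_series_ext; [| apply (Hcol 0%nat)].
    intros n. apply diag2_ext. intros i [|k]; reflexivity.
  - rewrite sum_Sn. eapply is_series_ext; [| exact (is_series_plus _ _ _ _ IH (Hcol (S K)))].
    intros n. cbv beta. change (plus ?a ?b) with (a + b).
    rewrite <- diag2_plus. apply diag2_ext. intros i k.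
    destruct (Nat.leb_spec k K), (Nat.leb_spec k (S K)), (Nat.eqb_spec k (S K));
      try lia; subst; cbn; lra.
Qed.

Lemma series_comparison (t u : nat -> R) : (forall n, Rabs (t n) <= u n) ->
  ex_series u -> ex_series t /\ Rabs (Series t) <= Series u.
Proof.
  intros Htu Hu.
  assert (Habs : ex_series (fun n => Rabs (t n))).
  { apply (ex_series_le (V := R_CompleteNormedModule) _ u); [| exact Hu].
    intros n. change (Rabs (Rabs (t n)) <= u n). now rewrite Rabs_Rabsolu. }
  split; [now apply ex_series_Rabs |].
  eapply Rle_trans; [now apply Series_Rabs |].
  apply Series_le; [| exact Hu]. intros n. split; [apply Rabs_pos | apply Htu].
Qed.

Lemma pow_antimono (q : R) m n : 0 <= q <= 1 -> (m <= n)%nat -> q ^ n <= q ^ m.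
Proof.
  intros Hq Hmn. induction Hmn as [|n _ IH]; [lra |].
  assert (0 <= q ^ n) by (apply pow_le; lra). simpl. nra.
Qed.

Section DiagonalSeries.

Variables (c : nat -> nat -> R) (rho : R).
Hypothesis rho_gt0 : 0 < rho.
Hypothesis c_summable : ex_series (diag2 (fun i k => Rabs (c i k) * rho ^ k)).

Let u i k := Rabs (c i k) * rho ^ k.

Let u_ge0 i k : 0 <= u i k.
Proof. apply Rmult_le_pos; [apply Rabs_pos | apply pow_le; lra]. Qed.

Lemma ex_series_diag2_column k : ex_series (fun i => c i k).
Proof.
  assert (Hp : 0 < rho ^ k) by (apply pow_lt; lra).
  apply (series_comparison _ (fun i => / rho ^ k * diag2 u (k + i))).
  - intros i. apply (Rmult_le_reg_l (rho ^ k)); [exact Hp |].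
    rewrite <- Rmult_assoc, Rinv_r, Rmult_1_l, Nat.add_comm by lra.
    rewrite Rmult_comm. exact (diag2_ge_term u i k u_ge0).
  - apply (ex_series_scal_l (V := R_NormedModule)).
    now apply (ex_series_incr_n (V := R_NormedModule) (diag2 u)).
Qed.

Variable Z : R.
Hypothesis Z_lt_rho : Rabs Z < rho.

Let w i k := c i k * Z ^ k.
Let tail K i k := if (K <? k)%nat then w i k else 0.
Let q := Rabs Z / rho.

Let q_bounds : 0 <= q < 1.
Proof.
  unfold q. split; [apply Rdiv_le_0_compat; [apply Rabs_pos | lra] |].
  apply (Rmult_lt_reg_r rho); [lra |]. unfold Rdiv. rewrite Rmult_assoc, Rinv_l; lra.
Qed.

Let abs_w i k : Rabs (w i k) = q ^ k * u i k.
Proof.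
  unfold w, u, q, Rdiv. rewrite Rabs_mult, <- RPow_abs, Rpow_mult_distr, pow_inv.
  field. apply pow_nonzero; lra.
Qed.

Let tail_bound K : ex_series (diag2 (tail K)) /\
  Rabs (Series (diag2 (tail K))) <= q ^ S K * Series (diag2 u).
Proof.
  rewrite <- Series_scal_l. apply series_comparison.
  - intros n. rewrite <- diag2_scal. eapply Rle_trans; [apply diag2_abs |].
    apply diag2_le. intros i k. unfold tail. destruct (Nat.ltb_spec K k).
    + rewrite abs_w. apply Rmult_le_compat_r; [apply u_ge0 |].
      apply pow_antimono; [pose proof q_bounds; lra | exact H].
    + rewrite Rabs_R0. apply Rmult_le_pos; [apply pow_le, q_bounds | apply u_ge0].
  - exact (ex_series_scal_l (V := R_NormedModule) (q ^ S K) _ c_summable).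
Qed.

Let partial_column_sums K :
  sum_n (fun k => Series (fun i => c i k) * Z ^ k) K
  = Series (diag2 w) - Series (diag2 (tail K)).
Proof.
  assert (Hcol : forall k, ex_series (fun i => w i k)).
  { intros k. apply (ex_series_ext (fun i => scal (Z ^ k) (c i k))).
    - intros i. unfold w. apply Rmult_comm.
    - apply (ex_series_scal_l (V := R_NormedModule)), ex_series_diag2_column. }
  rewrite (Series_ext (diag2 w)
             (fun n => diag2 (fun i k => if (k <=? K)%nat then w i k else 0) n
                       + diag2 (tail K) n)).
  2:{ intros n. rewrite <- diag2_plus. apply diag2_ext. intros i k. unfold tail.
      destruct (Nat.leb_spec k K), (Nat.ltb_spec K k); try lia; lra. }
  rewrite Series_plus;
    [| eexists; exact (is_series_diag2_trunc w K Hcol) | exact (proj1 (tail_bound K))].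
  rewrite (is_series_unique _ _ (is_series_diag2_trunc w K Hcol)).
  unfold Rminus. rewrite Rplus_assoc, Rplus_opp_r, Rplus_0_r.
  apply sum_n_ext. intros k. unfold w. now rewrite Series_scal_r.
Qed.

Lemma is_series_diag2_by_columns :
  is_series (fun k => Series (fun i => c i k) * Z ^ k)
            (Series (diag2 (fun i k => c i k * Z ^ k))).
Proof.
  fold w.
  set (M := Series (diag2 u)).
  assert (Hgeom : is_lim_seq (fun K => q ^ S K * M) 0).
  { replace 0 with (0 * M) by ring. apply (is_lim_seq_scal_r (fun K => q ^ S K) M 0).
    apply (is_lim_seq_incr_1 (fun n => q ^ n)), is_lim_seq_geom.
    pose proof q_bounds. rewrite Rabs_pos_eq; lra. }
  change (is_lim_seq (sum_n (fun k => Series (fun i => c i k) * Z ^ k)) (Series (diag2 w))).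
  apply (is_lim_seq_le_le (fun K => Series (diag2 w) - q ^ S K * M) _
                          (fun K => Series (diag2 w) + q ^ S K * M)).
  - intros K. rewrite partial_column_sums.
    pose proof (proj1 (Rabs_le_between _ _) (proj2 (tail_bound K))). unfold M. lra.
  - replace (Finite (Series (diag2 w))) with (Finite (Series (diag2 w) - 0)) by (f_equal; ring).
    apply is_lim_seq_minus'; [apply is_lim_seq_const | exact Hgeom].
  - replace (Finite (Series (diag2 w))) with (Finite (Series (diag2 w) + 0)) by (f_equal; ring).
    apply is_lim_seq_plus'; [apply is_lim_seq_const | exact Hgeom].
Qed.

End DiagonalSeries.

Lemma CV_radius_ge (a : nat -> R) (r : R) :
  (forall y, Rabs y < r -> ex_series (fun k => a k * y ^ k)) -> Rbar_le r (CV_radius a).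
Proof.
  intros Ha. apply Rbar_not_lt_le. intros Hlt.
  pose proof (CV_radius_ge_0 a) as H0.
  destruct (CV_radius a) as [R0 | |] eqn:E; simpl in Hlt, H0; try contradiction.
  set (y := (R0 + r) / 2).
  apply (CV_disk_outside a y).
  - rewrite E. simpl. unfold y. rewrite Rabs_pos_eq; lra.
  - apply ex_series_lim_0, Ha. unfold y. rewrite Rabs_pos_eq; lra.
Qed.

Lemma lt_CV_radius (a : nat -> R) (r y : R) :
  Rbar_le r (CV_radius a) -> Rabs y < r -> Rbar_lt (Rabs y) (CV_radius a).
Proof. intros Ha Hy. eapply Rbar_lt_le_trans; [| exact Ha]. exact Hy. Qed.

Lemma CV_radius_gt0 (a : nat -> R) (r : R) :
  0 < r -> Rbar_le r (CV_radius a) -> Rbar_lt 0 (CV_radius a).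
Proof.
  intros Hr Ha. rewrite <- Rabs_R0.
  apply (lt_CV_radius a r); [exact Ha | now rewrite Rabs_R0].
Qed.

Lemma is_derive_PSeries_0 (a : nat -> R) :
  Rbar_lt 0 (CV_radius a) -> is_derive (PSeries a) 0 (a 1%nat).
Proof.
  intros Ha. rewrite <- Rabs_R0 in Ha.
  assert (D := is_derive_PSeries a 0 Ha).
  rewrite PSeries_0 in D. unfold PS_derive in D. simpl INR in D. now rewrite Rmult_1_l in D.
Qed.

Lemma is_derive_shift (f : R -> R) x0 l :
  is_derive (fun X => f (x0 + X)) 0 l -> is_derive f x0 l.
Proof.
  intros Hf.
  assert (Hg : is_derive (fun x => x - x0) x0 1).
  { replace 1 with (1 - 0) by ring.
    apply (is_derive_minus (V := R_NormedModule));
      [apply (is_derive_id (K := R_AbsRing)) | apply (is_derive_const (V := R_NormedModule))]. }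
  rewrite <- (Rminus_diag x0) in Hf.
  assert (D := is_derive_comp (fun X => f (x0 + X)) (fun x => x - x0) x0 l 1 Hf Hg).
  change (scal 1 l) with (1 * l) in D. rewrite Rmult_1_l in D.
  eapply is_derive_ext; [| exact D]. intros x. simpl. f_equal. ring.
Qed.

Definition taylor_coef (f : R -> R) (k : nat) : R := Derive_n f k 0 / INR (Factorial.fact k).

Lemma taylor_coef_ext (f g : R -> R) k :
  (forall y, f y = g y) -> taylor_coef f k = taylor_coef g k.
Proof. intros H. unfold taylor_coef. now rewrite (Derive_n_ext f g k 0 H). Qed.

Lemma taylor_coef_PSeries (f : R -> R) (a : nat -> R) (r : R) k : 0 < r ->
  Rbar_le r (CV_radius a) -> (forall y, Rabs y < r -> f y = PSeries a y) ->
  taylor_coef f k = a k.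
Proof.
  intros Hr Ha Hf. unfold taylor_coef.
  rewrite (Derive_n_ext_loc f (PSeries a)).
  - rewrite Derive_n_coef by exact (CV_radius_gt0 a r Hr Ha).
    field. apply INR_fact_neq_0.
  - apply (locally_interval _ 0 (- r) r); [simpl; lra | simpl; lra |].
    intros y Hy1 Hy2. apply Hf. apply Rabs_def1; simpl in *; lra.
Qed.

Definition series2_on (G : R -> R -> R) (b : nat -> nat -> R) (r : R) : Prop :=
  forall X Z, Rabs X < r -> Rabs Z < r ->
    ex_series (diag2 (fun i k => Rabs (b i k) * Rabs X ^ i * Rabs Z ^ k)) /\
    G X Z = Series (diag2 (fun i k => b i k * X ^ i * Z ^ k)).

Lemma series2_on_swap G b r :
  series2_on G b r -> series2_on (fun Z X => G X Z) (fun k i => b i k) r.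
Proof.
  intros HG Z X HZ HX. destruct (HG X Z HX HZ) as [Habs Heq]. split.
  - eapply ex_series_ext; [| exact Habs]. intros n.
    rewrite <- diag2_swap. apply diag2_ext. intros; ring.
  - rewrite Heq. apply Series_ext. intros n.
    rewrite <- diag2_swap. apply diag2_ext. intros; ring.
Qed.

Section Series2.

Variables (G : R -> R -> R) (b : nat -> nat -> R) (r : R).
Hypothesis r_gt0 : 0 < r.
Hypothesis G_series : series2_on G b r.

Lemma series2_columns X : Rabs X < r ->
  (forall k, ex_series (fun i => b i k * X ^ i)) /\
  (forall Z, Rabs Z < r -> is_series (fun k => PSeries (fun i => b i k) X * Z ^ k) (G X Z)).
Proof.
  intros HX.
  assert (Hdiag : forall rho, 0 < rho < r ->
            ex_series (diag2 (fun i k => Rabs (b i k * X ^ i) * rho ^ k))).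
  { intros rho Hrho. destruct (G_series X rho HX) as [Habs _]; [rewrite Rabs_pos_eq; lra |].
    eapply ex_series_ext; [| exact Habs]. intros n. apply diag2_ext. intros i k.
    rewrite Rabs_mult, RPow_abs, (Rabs_pos_eq rho) by lra. reflexivity. }
  split.
  - intros k. apply (ex_series_diag2_column (fun i k => b i k * X ^ i) (r / 2));
      [lra | apply Hdiag; lra].
  - intros Z HZ. set (rho := (Rabs Z + r) / 2).
    pose proof (Rabs_pos Z).
    rewrite (proj2 (G_series X Z HX HZ)).
    apply (is_series_diag2_by_columns (fun i k => b i k * X ^ i) rho);
      unfold rho; [lra | apply Hdiag; lra | lra].
Qed.

Lemma series2_column_CV_radius k : Rbar_le r (CV_radius (fun i => b i k)).
Proof. apply CV_radius_ge. intros X HX. exact (proj1 (series2_columns X HX) k). Qed.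

Lemma series2_expansion_CV_radius X : Rabs X < r ->
  Rbar_le r (CV_radius (fun k => PSeries (fun i => b i k) X)).
Proof.
  intros HX. apply CV_radius_ge. intros Z HZ.
  eexists. exact (proj2 (series2_columns X HX) Z HZ).
Qed.

Lemma series2_expansion X Z : Rabs X < r -> Rabs Z < r ->
  G X Z = PSeries (fun k => PSeries (fun i => b i k) X) Z.
Proof.
  intros HX HZ. symmetry. apply is_series_unique. exact (proj2 (series2_columns X HX) Z HZ).
Qed.

End Series2.

Section Series2Derivatives.

Variables (G : R -> R -> R) (b : nat -> nat -> R) (r : R).
Hypothesis r_gt0 : 0 < r.
Hypothesis G_series : series2_on G b r.

Let G_series_swap := series2_on_swap G b r G_series.

Lemma series2_row_CV_radius i : Rbar_le r (CV_radius (fun k => b i k)).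
Proof. exact (series2_column_CV_radius _ _ r r_gt0 G_series_swap i). Qed.

Lemma is_derive_series2 Z : Rabs Z < r ->
  is_derive (fun X => G X Z) 0 (PSeries (fun k => b 1%nat k) Z).
Proof.
  intros HZ. apply (is_derive_ext_loc (PSeries (fun i => PSeries (fun k => b i k) Z))).
  - apply (locally_interval _ 0 (- r) r); simpl; [lra | lra |]. intros X H1 H2.
    symmetry. apply (series2_expansion _ _ r r_gt0 G_series_swap Z X HZ).
    apply Rabs_def1; lra.
  - apply is_derive_PSeries_0, (CV_radius_gt0 _ r r_gt0).
    exact (series2_expansion_CV_radius _ _ r r_gt0 G_series_swap Z HZ).
Qed.

Lemma is_derive_series2_taylor_coef k :
  is_derive (fun X => taylor_coef (G X) k) 0 (b 1%nat k).
Proof.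
  apply (is_derive_ext_loc (PSeries (fun i => b i k))).
  - apply (locally_interval _ 0 (- r) r); simpl; [lra | lra |]. intros X H1 H2.
    assert (HX : Rabs X < r) by (apply Rabs_def1; lra).
    symmetry. apply (taylor_coef_PSeries _ (fun k => PSeries (fun i => b i k) X) r k r_gt0).
    + exact (series2_expansion_CV_radius G b r r_gt0 G_series X HX).
    + intros Z HZ. exact (series2_expansion G b r r_gt0 G_series X Z HX HZ).
  - apply is_derive_PSeries_0, (CV_radius_gt0 _ r r_gt0).
    exact (series2_column_CV_radius G b r r_gt0 G_series k).
Qed.

End Series2Derivatives.

Lemma diag3_slice_mid (a : nat -> nat -> nat -> R) X Z n :
  diag3 (fun i j k => a i j k * X ^ i * 0 ^ j * Z ^ k) n
  = diag2 (fun i k => a i 0%nat k * X ^ i * Z ^ k) n.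
Proof.
  unfold diag3, diag2. apply sum_n_ext. intros i.
  rewrite (sum_n_single _ _ 0); [| lia |].
  - simpl. now rewrite Nat.sub_0_r, Rmult_1_r.
  - intros j _ Hj. rewrite pow_i by lia. ring.
Qed.

Lemma diag3_slice_first (a : nat -> nat -> nat -> R) Y Z n :
  diag3 (fun i j k => a i j k * 0 ^ i * Y ^ j * Z ^ k) n
  = diag2 (fun j k => a 0%nat j k * Y ^ j * Z ^ k) n.
Proof.
  unfold diag3, diag2. rewrite (sum_n_single _ _ 0); [| lia |].
  - replace (n - 0)%nat with n by lia. apply sum_n_ext. intros j. simpl. now rewrite Rmult_1_r.
  - intros i _ Hi. apply sum_n_eq0. intros j _. rewrite pow_i by lia. ring.
Qed.

Lemma analytic3_at_slices F x0 y0 z0 : analytic3_at F x0 y0 z0 ->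
  exists r (a : nat -> nat -> nat -> R), 0 < r /\
    series2_on (fun X Z => F (x0 + X) y0 (z0 + Z)) (fun i k => a i 0%nat k) r /\
    series2_on (fun Y Z => F x0 (y0 + Y) (z0 + Z)) (fun j k => a 0%nat j k) r.
Proof.
  intros (r & Hr & a & Ha). exists r, a.
  assert (Hshift : forall X Y Z, Rabs X < r -> Rabs Y < r -> Rabs Z < r ->
    ex_series (diag3 (fun i j k => Rabs (a i j k) * Rabs X ^ i * Rabs Y ^ j * Rabs Z ^ k)) /\
    F (x0 + X) (y0 + Y) (z0 + Z)
    = Series (diag3 (fun i j k => a i j k * X ^ i * Y ^ j * Z ^ k))).
  { intros X Y Z. specialize (Ha (x0 + X) (y0 + Y) (z0 + Z)).
    replace (x0 + X - x0) with X in Ha by ring. replace (y0 + Y - y0) with Y in Ha by ring.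
    replace (z0 + Z - z0) with Z in Ha by ring. exact Ha. }
  assert (H0 : Rabs 0 < r) by (rewrite Rabs_R0; exact Hr).
  split; [exact Hr | split].
  - intros X Z HX HZ. destruct (Hshift X 0 Z HX H0 HZ) as [Habs Heq].
    rewrite Rabs_R0 in Habs. rewrite Rplus_0_r in Heq. split.
    + eapply ex_series_ext; [| exact Habs]. intros n. apply diag3_slice_mid.
    + rewrite Heq. apply Series_ext. intros n. apply diag3_slice_mid.
  - intros Y Z HY HZ. destruct (Hshift 0 Y Z H0 HY HZ) as [Habs Heq].
    rewrite Rabs_R0 in Habs. rewrite Rplus_0_r in Heq. split.
    + eapply ex_series_ext; [| exact Habs]. intros n. apply diag3_slice_first.
    + rewrite Heq. apply Series_ext. intros n. apply diag3_slice_first.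
Qed.

Definition analytic_at (f : R -> R) (e0 : R) : Prop :=
  exists (A : nat -> R) (r : R), 0 < r /\ Rbar_le r (CV_radius A) /\
    forall y, Rabs y < r -> f (e0 + y) = PSeries A y.

Lemma analytic3_at_analytic_at F x0 y0 z0 :
  analytic3_at F x0 y0 z0 -> analytic_at (F x0 y0) z0.
Proof.
  intros HF. destruct (analytic3_at_slices F x0 y0 z0 HF) as (r & a & Hr & HX & _).
  assert (H0 : Rabs 0 < r) by (rewrite Rabs_R0; exact Hr).
  assert (Hcoef : forall k, PSeries (fun i => a i 0%nat k) 0 = a 0%nat 0%nat k)
    by (intros k; apply PSeries_0).
  exists (fun k => a 0%nat 0%nat k), r. split; [exact Hr | split].
  - rewrite <- (CV_radius_ext (fun k => PSeries (fun i => a i 0%nat k) 0)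
                               (fun k => a 0%nat 0%nat k) Hcoef).
    exact (series2_expansion_CV_radius _ _ r Hr HX 0 H0).
  - intros y Hy. rewrite <- (Rplus_0_r x0), (series2_expansion _ _ r Hr HX 0 y H0 Hy).
    apply PSeries_ext. exact Hcoef.
Qed.

Lemma continuous_zero_of_left (h : R -> R) x0 rho : 0 < rho -> continuous h x0 ->
  (forall y, x0 - rho < y < x0 -> h y = 0) -> h x0 = 0.
Proof.
  intros Hrho Hc Hz.
  apply (filterlim_locally_unique (F := at_left x0) h (h x0) 0).
  - apply (filterlim_filter_le_1 h (filter_le_within (F := locally x0) (fun u => u < x0))).
    exact Hc.
  - apply (filterlim_ext_loc (fun _ => 0)); [| apply filterlim_const].
    exists (mkposreal rho Hrho). intros y Hy Hlt. symmetry. apply Hz.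
    change (Rabs (y - x0) < rho) in Hy. apply Rabs_def2 in Hy. lra.
Qed.

Lemma PSeries_coef_eq_of_left (A B : nat -> R) (rho : R) : 0 < rho ->
  Rbar_le rho (CV_radius A) -> Rbar_le rho (CV_radius B) ->
  (forall y, - rho < y < 0 -> PSeries A y = PSeries B y) -> forall n, A n = B n.
Proof.
  intros Hrho HA HB Heq n.
  set (c := PS_minus A B).
  assert (Hex : forall y, Rabs y < rho -> ex_pseries A y /\ ex_pseries B y).
  { intros y Hy. split; apply CV_radius_inside; eapply lt_CV_radius; eassumption. }
  assert (Hc : Rbar_le rho (CV_radius c)).
  { apply CV_radius_ge. intros y Hy. apply (ex_pseries_R c y).
    destruct (Hex y Hy) as [HAy HBy]. exact (ex_pseries_minus A B y HAy HBy). }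
  assert (Hc0 : forall y, - rho < y < 0 -> PSeries c y = 0).
  { intros y Hy. assert (Hy' : Rabs y < rho) by (apply Rabs_def1; lra).
    destruct (Hex y Hy') as [HAy HBy].
    unfold c. rewrite (PSeries_minus A B y HAy HBy), Heq by exact Hy. ring. }
  assert (Hderiv : Derive_n (PSeries c) n 0 = 0).
  { assert (H0 : Rbar_lt (Rabs 0) (CV_radius c))
      by (apply (lt_CV_radius c rho 0 Hc); rewrite Rabs_R0; exact Hrho).
    rewrite Derive_n_PSeries by exact H0.
    apply (continuous_zero_of_left _ 0 rho Hrho).
    - apply continuity_pt_filterlim, PSeries_continuity. now rewrite CV_radius_derive_n.
    - intros y Hy. assert (Hy' : Rabs y < rho) by (apply Rabs_def1; lra).
      rewrite <- Derive_n_PSeries by exact (lt_CV_radius c rho y Hc Hy').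
      rewrite (Derive_n_ext_loc _ (fun _ => 0)).
      + destruct n; [reflexivity | apply Derive_n_const].
      + apply (locally_interval _ y (- rho) 0); simpl; [lra | lra |].
        intros t Ht1 Ht2. apply Hc0. lra. }
  rewrite Derive_n_coef in Hderiv by exact (CV_radius_gt0 c rho Hrho Hc).
  apply Rmult_integral in Hderiv as [Hcn | Hfact];
    [| now apply INR_fact_neq_0 in Hfact].
  unfold c, PS_minus in Hcn. change (A n - B n = 0) in Hcn. lra.
Qed.

Lemma analytic_eq_past (f g : R -> R) T rho : 0 < rho ->
  analytic_at f T -> analytic_at g T -> (forall s, T - rho < s < T -> f s = g s) ->
  exists m, 0 < m /\ forall s, T <= s < T + m -> f s = g s.
Proof.
  intros Hrho (A & r1 & Hr1 & HA & Hf) (B & r2 & Hr2 & HB & Hg) Heq.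
  set (m := Rmin r1 r2).
  assert (Hm : 0 < m) by (apply Rmin_pos; lra).
  assert (Hm1 : m <= r1) by apply Rmin_l.
  assert (Hm2 : m <= r2) by apply Rmin_r.
  set (rho' := Rmin rho m).
  assert (Hrho' : 0 < rho' <= m) by (split; [apply Rmin_pos; lra | apply Rmin_r]).
  assert (Hrho'' : rho' <= rho) by apply Rmin_l.
  assert (HAB : forall n, A n = B n).
  { apply (PSeries_coef_eq_of_left A B rho'); [lra | | |].
    - eapply Rbar_le_trans; [| exact HA]. simpl. lra.
    - eapply Rbar_le_trans; [| exact HB]. simpl. lra.
    - intros y Hy. assert (Hy' : Rabs y < m) by (apply Rabs_def1; lra).
      rewrite <- Hf, <- Hg by lra. apply Heq. lra. }
  exists m. split; [exact Hm |]. intros s Hs.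
  assert (Hs' : Rabs (s - T) < m) by (rewrite Rabs_pos_eq; lra).
  replace s with (T + (s - T)) by ring.
  rewrite Hf, Hg by lra. apply PSeries_ext, HAB.
Qed.

Lemma analytic_eq_right (f g : R -> R) a b delta : 0 < delta ->
  (forall e, a <= e < b -> analytic_at f e /\ analytic_at g e) ->
  (forall e, a <= e < a + delta -> f e = g e) ->
  forall e, a <= e < b -> f e = g e.
Proof.
  intros Hdelta Han Hnear e He.
  destruct (Req_dec (f e) (g e)) as [Heq | Hne]; [exact Heq | exfalso].
  set (E := fun t => a <= t /\ forall s, a <= s <= t -> f s = g s).
  assert (HEe : forall t, E t -> t < e).
  { intros t [Ht HE]. apply Rnot_le_lt. intros Hle. apply Hne, HE. lra. }
  assert (HE0 : E (a + delta / 2)) by (split; [lra | intros s Hs; apply Hnear; lra]).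
  destruct (completeness E) as [T [HTub HTlub]].
  { exists e. intros t Ht. left. now apply HEe. }
  { now exists (a + delta / 2). }
  assert (HT1 : a + delta / 2 <= T) by (apply HTub, HE0).
  assert (HT2 : T <= e) by (apply HTlub; intros t Ht; left; now apply HEe).
  assert (Hbelow : forall s, a <= s < T -> f s = g s).
  { intros s Hs. destruct (classic (exists t, E t /\ s < t)) as [(t & [_ Ht] & Hst) | Hno].
    - apply Ht. lra.
    - exfalso. assert (T <= s); [| lra].
      apply HTlub. intros t Ht. apply Rnot_lt_le. intros Hst. apply Hno. now exists t. }
  destruct (Han T ltac:(lra)) as [HfT HgT].
  destruct (analytic_eq_past f g T (T - a) ltac:(lra) HfT HgT) as (m & Hm & Hpast).
  { intros s Hs. apply Hbelow. lra. }
  assert (HEm : E (T + m / 2)).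
  { split; [lra |]. intros s Hs.
    destruct (Rlt_le_dec s T); [apply Hbelow | apply Hpast]; lra. }
  assert (T + m / 2 <= T) by (apply HTub, HEm). lra.
Qed.

Lemma analytic_at_reflect (f : R -> R) e0 :
  analytic_at f (- e0) -> analytic_at (fun e => f (- e)) e0.
Proof.
  intros (A & r & Hr & HA & Hf).
  assert (Hterm : forall n y, A n * (- y) ^ n = (-1) ^ n * A n * y ^ n).
  { intros n y. replace (- y) with (-1 * y) by ring. rewrite Rpow_mult_distr. ring. }
  exists (fun n => (-1) ^ n * A n), r. split; [exact Hr | split].
  - apply CV_radius_ge. intros y Hy.
    apply (ex_series_ext (fun n => A n * (- y) ^ n)); [intros n; apply Hterm |].
    apply ex_pseries_R, CV_radius_inside, (lt_CV_radius A r); [exact HA |].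
    now rewrite Rabs_Ropp.
  - intros y Hy. cbv beta. replace (- (e0 + y)) with (- e0 + - y) by ring.
    rewrite Hf by (now rewrite Rabs_Ropp). apply Series_ext. intros n. apply Hterm.
Qed.

Lemma analytic_eq_on_interval (f g : R -> R) eps0 delta : 0 < delta ->
  (forall e, - eps0 < e < eps0 -> analytic_at f e /\ analytic_at g e) ->
  (forall e, Rabs e < delta -> f e = g e) ->
  forall e, - eps0 < e < eps0 -> f e = g e.
Proof.
  intros Hdelta Han Hnear e He.
  destruct (Rle_or_lt 0 e) as [He0 | He0].
  - apply (analytic_eq_right f g 0 eps0 delta Hdelta); [| | lra].
    + intros e' He'. apply Han. lra.
    + intros e' He'. apply Hnear. rewrite Rabs_pos_eq; lra.
  - replace e with (- - e) by ring.
    apply (analytic_eq_right (fun e => f (- e)) (fun e => g (- e)) 0 eps0 delta Hdelta);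
      [| | lra].
    + intros e' He'. destruct (Han (- e') ltac:(lra)).
      split; now apply analytic_at_reflect.
    + intros e' He'. apply Hnear. rewrite Rabs_Ropp, Rabs_pos_eq; lra.
Qed.

Lemma analytic_eq_of_taylor_coef (f g : R -> R) eps0 : 0 < eps0 ->
  (forall e, - eps0 < e < eps0 -> analytic_at f e /\ analytic_at g e) ->
  (forall k, taylor_coef f k = taylor_coef g k) ->
  forall e, - eps0 < e < eps0 -> f e = g e.
Proof.
  intros Heps Han Hcoef.
  destruct (Han 0 ltac:(lra)) as [(A & r1 & Hr1 & HA & Hf) (B & r2 & Hr2 & HB & Hg)].
  assert (Hf0 : forall y, Rabs y < r1 -> f y = PSeries A y)
    by (intros y Hy; rewrite <- (Hf y Hy), Rplus_0_l; reflexivity).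
  assert (Hg0 : forall y, Rabs y < r2 -> g y = PSeries B y)
    by (intros y Hy; rewrite <- (Hg y Hy), Rplus_0_l; reflexivity).
  assert (HAB : forall k, A k = B k).
  { intros k. rewrite <- (taylor_coef_PSeries f A r1 k Hr1 HA Hf0),
                      <- (taylor_coef_PSeries g B r2 k Hr2 HB Hg0).
    apply Hcoef. }
  apply (analytic_eq_on_interval f g eps0 (Rmin r1 r2)); [apply Rmin_pos; lra | exact Han |].
  intros e He. pose proof (Rmin_l r1 r2). pose proof (Rmin_r r1 r2).
  rewrite Hf0, Hg0 by lra. apply PSeries_ext, HAB.
Qed.

Lemma coef_relation_of_PSeries (p q : nat -> R) (c1 c2 r : R) : 0 < r ->
  Rbar_le r (CV_radius p) -> Rbar_le r (CV_radius q) ->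
  (forall z, Rabs z < r -> z * c1 * PSeries p z + c2 * PSeries q z = 0) ->
  c2 * q 0%nat = 0 /\ forall k, c1 * p k + c2 * q (S k) = 0.
Proof.
  intros Hr Hp Hq Hrel.
  set (s := PS_plus (PS_scal c1 (PS_incr_1 p)) (PS_scal c2 q)).
  assert (Hex : forall z, Rabs z < r ->
            ex_pseries (PS_scal c1 (PS_incr_1 p)) z /\ ex_pseries (PS_scal c2 q) z).
  { intros z Hz.
    pose proof (CV_radius_inside p z (lt_CV_radius p r z Hp Hz)) as Hpz.
    pose proof (CV_radius_inside q z (lt_CV_radius q r z Hq Hz)) as Hqz.
    split.
    - exact (ex_pseries_scal c1 _ z (Rmult_comm z c1) (ex_pseries_incr_1 p z Hpz)).
    - exact (ex_pseries_scal c2 q z (Rmult_comm z c2) Hqz). }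
  assert (Hs : forall z, Rabs z < r -> PSeries s z = 0).
  { intros z Hz. destruct (Hex z Hz) as [H1 H2].
    unfold s. rewrite (PSeries_plus _ _ z H1 H2).
    rewrite !PSeries_scal, PSeries_incr_1, <- (Hrel z Hz). ring. }
  assert (Hs0 : forall n, s n = 0).
  { intros n. apply (PSeries_ext_recip s (fun _ => 0) n).
    - apply (CV_radius_gt0 s r Hr), CV_radius_ge. intros z Hz.
      destruct (Hex z Hz) as [H1 H2]. apply (ex_pseries_R s z).
      exact (ex_pseries_plus _ _ z H1 H2).
    - now rewrite CV_radius_const_0.
    - apply (locally_interval _ 0 (- r) r); simpl; [lra | lra |]. intros z Hz1 Hz2.
      rewrite PSeries_const_0. apply Hs, Rabs_def1; lra. }
  split.
  - pose proof (Hs0 0%nat) as H0. unfold s, PS_plus, PS_scal, PS_incr_1 in H0.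
    change (c1 * 0 + c2 * q 0%nat = 0) in H0. lra.
  - intros k. exact (Hs0 (S k)).
Qed.

Lemma is_derive_zero_const (h : R -> R) :
  (forall x, is_derive h x 0) -> forall a b, h a = h b.
Proof.
  intros Hh a b. destruct (Rtotal_order a b) as [Hab | [-> | Hab]].
  - apply eq_is_derive; [intros; apply Hh | exact Hab].
  - reflexivity.
  - symmetry. apply eq_is_derive; [intros; apply Hh | exact Hab].
Qed.

Section TransportHierarchy.

Variables (beta : R) (g : nat -> R -> R -> R).
Hypothesis g_periodic : forall k I th, g k I (th + 2 * PI) = g k I th.
Hypothesis g_hierarchy : forall I th, exists p q : nat -> R,
  (forall k, is_derive (fun x => g k x th) I (p k)) /\
  (forall k, is_derive (fun y => g k I y) th (q k)) /\
  I * q 0%nat = 0 /\ (forall k, (beta * sin th + 1) * p k + I * q (S k) = 0).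

Lemma hierarchy_is_derive_I k I th :
  is_derive (fun x => g k x th) I (Derive (fun x => g k x th) I).
Proof.
  destruct (g_hierarchy I th) as (p & q & Hp & _).
  exact (Derive_correct _ _ (ex_intro _ _ (Hp k))).
Qed.

Lemma hierarchy_is_derive_th k I th :
  is_derive (fun y => g k I y) th (Derive (fun y => g k I y) th).
Proof.
  destruct (g_hierarchy I th) as (p & q & _ & Hq & _).
  exact (Derive_correct _ _ (ex_intro _ _ (Hq k))).
Qed.

Lemma hierarchy_base I th : I * Derive (fun y => g 0%nat I y) th = 0.
Proof.
  destruct (g_hierarchy I th) as (p & q & _ & Hq & H0 & _).
  replace (Derive (fun y => g 0%nat I y) th) with (q 0%nat); [exact H0 |].
  symmetry. apply is_derive_unique, Hq.
Qed.

Lemma hierarchy_step k I th :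
  (beta * sin th + 1) * Derive (fun x => g k x th) I
  + I * Derive (fun y => g (S k) I y) th = 0.
Proof.
  destruct (g_hierarchy I th) as (p & q & Hp & Hq & _ & HS).
  replace (Derive (fun x => g k x th) I) with (p k)
    by (symmetry; apply is_derive_unique, Hp).
  replace (Derive (fun y => g (S k) I y) th) with (q (S k))
    by (symmetry; apply is_derive_unique, Hq).
  apply HS.
Qed.

Lemma hierarchy_theta_const k :
  (forall I th, I * Derive (fun y => g k I y) th = 0) ->
  forall I th, g k I th = g k I 0.
Proof.
  intros Hk.
  assert (Hne : forall I, I <> 0 -> forall th, g k I th = g k I 0).
  { intros I HI th. apply (is_derive_zero_const (fun y => g k I y)). intros y.
    assert (Hd := hierarchy_is_derive_th k I y).
    destruct (Rmult_integral _ _ (Hk I y)) as [| Hzero]; [contradiction |].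
    now rewrite Hzero in Hd. }
  intros I th. destruct (Req_dec I 0) as [-> | HI]; [| now apply Hne].
  (* At [I = 0] the equation says nothing; continuity in [I] carries the identity over. *)
  set (h := fun x => g k x th - g k x 0).
  enough (h 0 = 0) by (unfold h in *; lra).
  apply (continuous_zero_of_left h 0 1 Rlt_0_1).
  - apply (ex_derive_continuous h), (ex_derive_minus (fun x => g k x th) (fun x => g k x 0)).
    + exact (ex_intro _ _ (hierarchy_is_derive_I k 0 th)).
    + exact (ex_intro _ _ (hierarchy_is_derive_I k 0 0)).
  - intros y Hy. unfold h. rewrite (Hne y) by lra. ring.
Qed.

Lemma hierarchy_I_const k :
  (forall I th, g k I th = g k I 0) ->
  forall I th, Derive (fun x => g k x th) I = 0.
Proof.
  intros Hk I th.
  set (d := Derive (fun x => g k x 0) I).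
  assert (Hd : forall y, Derive (fun x => g k x y) I = d).
  { intros y. apply Derive_ext. intros x. apply Hk. }
  rewrite Hd.
  set (phi := fun y => I * g (S k) I y + d * (y - beta * cos y)).
  assert (Hphi : forall y, is_derive phi y 0).
  { intros y. unfold phi.
    replace 0 with (I * Derive (fun y => g (S k) I y) y + d * (1 + beta * sin y))
      by (rewrite <- (hierarchy_step k I y), Hd; ring).
    apply (is_derive_plus (V := R_NormedModule)); apply is_derive_scal.
    - apply hierarchy_is_derive_th.
    - auto_derive; [constructor | ring]. }
  assert (Hper := is_derive_zero_const phi Hphi (0 + 2 * PI) 0).
  unfold phi in Hper. rewrite g_periodic, Rplus_0_l, cos_2PI, cos_0 in Hper.
  assert (Hd2pi : d * (2 * PI) = 0) by lra.
  pose proof PI_RGT_0.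
  destruct (Rmult_integral _ _ Hd2pi); [assumption | lra].
Qed.

Lemma hierarchy_theta_derive k : forall I th, I * Derive (fun y => g k I y) th = 0.
Proof.
  induction k as [|k IH]; intros I th; [apply hierarchy_base |].
  pose proof (hierarchy_step k I th) as Hs.
  rewrite (hierarchy_I_const k (hierarchy_theta_const k IH)) in Hs. lra.
Qed.

Lemma hierarchy_const k I th : g k I th = g k 0 0.
Proof.
  pose proof (hierarchy_theta_const k (hierarchy_theta_derive k)) as Htheta.
  rewrite Htheta. apply (is_derive_zero_const (fun x => g k x 0)). intros x.
  assert (Hd := hierarchy_is_derive_I k x 0).
  now rewrite (hierarchy_I_const k Htheta) in Hd.
Qed.

End TransportHierarchy.

Definition eps_coef (F : R -> R -> R -> R) (k : nat) (I th : R) : R := taylor_coef (F I th) k.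

Section FirstIntegral.

Variables (beta eps0 : R) (F : R -> R -> R -> R).
Hypothesis eps0_gt0 : 0 < eps0.
Hypothesis F_analytic : forall I th e, - eps0 < e < eps0 -> analytic3_at F I th e.
Hypothesis F_periodic : forall I th e, - eps0 < e < eps0 -> F I (th + 2 * PI) e = F I th e.
Hypothesis F_invariant : forall I th e, - eps0 < e < eps0 ->
  e * (beta * sin th + 1) * Derive (fun J => F J th e) I
  + I * Derive (fun t => F I t e) th = 0.

Lemma eps_coef_periodic k I th : eps_coef F k I (th + 2 * PI) = eps_coef F k I th.
Proof.
  unfold eps_coef, taylor_coef. f_equal. apply Derive_n_ext_loc.
  apply (locally_interval _ 0 (- eps0) eps0); simpl; [lra | lra |].
  intros e H1 H2. apply F_periodic. lra.
Qed.

Lemma eps_coef_hierarchy I th : exists p q : nat -> R,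
  (forall k, is_derive (fun x => eps_coef F k x th) I (p k)) /\
  (forall k, is_derive (fun y => eps_coef F k I y) th (q k)) /\
  I * q 0%nat = 0 /\ (forall k, (beta * sin th + 1) * p k + I * q (S k) = 0).
Proof.
  destruct (analytic3_at_slices F I th 0 (F_analytic I th 0 ltac:(lra)))
    as (r & a & Hr & HX & HY).
  assert (Hcoef : forall x y k, taylor_coef (fun Z => F x y (0 + Z)) k = eps_coef F k x y)
    by (intros; apply taylor_coef_ext; intros; now rewrite Rplus_0_l).
  exists (a 1%nat 0%nat), (a 0%nat 1%nat).
  split; [| split].
  - intros k. apply is_derive_shift.
    eapply is_derive_ext; [intros X; apply Hcoef |].
    exact (is_derive_series2_taylor_coef _ _ r Hr HX k).
  - intros k. apply is_derive_shift.
    eapply is_derive_ext; [intros Y; apply Hcoef |].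
    exact (is_derive_series2_taylor_coef _ _ r Hr HY k).
  - set (r' := Rmin r eps0).
    assert (Hr' : 0 < r' <= r) by (split; [apply Rmin_pos | apply Rmin_l]; lra).
    apply (coef_relation_of_PSeries _ _ _ _ r'); [lra | | |].
    + eapply Rbar_le_trans; [| exact (series2_row_CV_radius _ _ r Hr HX 1)]. simpl. lra.
    + eapply Rbar_le_trans; [| exact (series2_row_CV_radius _ _ r Hr HY 1)]. simpl. lra.
    + intros z Hz. assert (Hzr : Rabs z < r) by lra.
      assert (Hze : - eps0 < z < eps0)
        by (pose proof (Rmin_r r eps0); pose proof (Rabs_def2 _ _ Hz); unfold r' in *; lra).
      replace (PSeries (a 1%nat 0%nat) z) with (Derive (fun J => F J th z) I).
      replace (PSeries (a 0%nat 1%nat) z) with (Derive (fun t => F I t z) th).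
      * exact (F_invariant I th z Hze).
      * apply is_derive_unique, is_derive_shift.
        pose proof (is_derive_series2 _ _ r Hr HY z Hzr) as D.
        cbv beta in D. rewrite Rplus_0_l in D. exact D.
      * apply is_derive_unique, is_derive_shift.
        pose proof (is_derive_series2 _ _ r Hr HX z Hzr) as D.
        cbv beta in D. rewrite Rplus_0_l in D. exact D.
Qed.

End FirstIntegral.

Theorem proposition6p1 (beta : R) :
  ~ (exists (eps0 : R) (F : R -> R -> R -> R),
       analytic_first_integral beta eps0 F /\ nonconstant_in_phase eps0 F).
Proof.
  intros (eps0 & F & (Heps & Han & Hper & Hinv) & (e & I1 & th1 & I2 & th2 & He & Hne)).
  apply Hne.
  assert (Hcoef : forall k I th, eps_coef F k I th = eps_coef F k 0 0).
  { apply (hierarchy_const beta).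
    - exact (eps_coef_periodic eps0 F Heps Hper).
    - exact (eps_coef_hierarchy beta eps0 F Heps Han Hinv). }
  apply (analytic_eq_of_taylor_coef (F I1 th1) (F I2 th2) eps0 Heps); [| | exact He].
  - intros e' He'. split; apply analytic3_at_analytic_at, Han, He'.
  - intros k. change (eps_coef F k I1 th1 = eps_coef F k I2 th2).
    now rewrite (Hcoef k I1 th1), (Hcoef k I2 th2).
Qed.
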